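(* Let $K$ be either a number field or a one-dimensional function field of characteristic $0$, with algebraic closure $\bar K$. Assume either that $X$ is a smooth projective variety over $K$ and $f:X\dashrightarrow X$ is a dominant rational map defined over $K$, or that $X$ is a normal projective variety over $K$ and $f:X\to X$ is a dominant morphism defined over $K$. Let $h_X$ be a Weil height relative to an ample divisor. Let $P\in X_f(\bar K)$ be a point whose forward orbit $\mathcal O_f(P)=\{f^n(P):n\ge0\}$ is infinite, and assume that the arithmetic degree $\alpha_f(P)$ exists. Then \[ \lim_{B\to\infty}\frac{\#\{Q\in\mathcal O_f(P): h_X(Q)\le B\}}{\log B}=\frac{1}{\log\alpha_f(P)}, \] where, if $\alpha_f(P)=1$, this is to be read as saying that the limit equals $\infty$.
   Context: $I_f$ is the indeterminacy locus of $f$ and $X_f(\bar K)$ is the set of $P\in X(\bar K)$ with $f^n(P)\notin I_f$ for all $n\ge0$. Put $h_X^+=\max\{h_X,1\}$. The arithmetic degree of $f$ at $P$ is $\alpha_f(P)=\lim_{n\to\infty}h_X^+\bigl(f^n(P)\bigr)^{1/n}$, when this limit exists. *)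

From HB Require Import structures.
From mathcomp Require Import all_boot all_order all_algebra.
From mathcomp Require Import finmap all_classical all_reals all_analysis.
Set Implicit Arguments. Unset Strict Implicit. Unset Printing Implicit Defensive.
Import Order.TTheory GRing.Theory Num.Theory.
Import numFieldNormedType.Exports.
Local Open Scope classical_set_scope.
Local Open Scope ring_scope.

Definition forward_orbit (X : Type) (f : X -> X) (P : X) : set X :=
  [set Q | exists n : nat, Q = iter n f P].

Definition hplus (R : realType) (X : Type) (h : X -> R) (Q : X) : R :=
  Num.max (h Q) 1.

Definition arith_degree_is (R : realType) (X : Type) (f : X -> X) (h : X -> R)
    (P : X) (a : R) : Prop :=
  (fun n : nat => powR (hplus h (iter n f P)) (n%:R)^-1 : R) @ \oo --> (a : R).

Definition orbit_count (R : realType) (X : choiceType) (f : X -> X) (h : X -> R)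
    (P : X) (B : R) : \bar R :=
  let S := forward_orbit f P `&` [set Q | h Q <= B] in
  if pselect (finite_set S) then ((#|` fset_set S|)%:R)%:E else +oo%E.

From HB Require Import structures.
From mathcomp Require Import all_boot all_order all_algebra finmap.
From mathcomp Require Import all_classical all_reals all_analysis.
From mathcomp Require Import ring lra zify.
Set Implicit Arguments. Unset Strict Implicit. Unset Printing Implicit Defensive.
Import Order.TTheory GRing.Theory Num.Theory.
Import numFieldNormedType.Exports.
Local Open Scope classical_set_scope.
Local Open Scope ring_scope.

(* Write h^+(f^n P) = exp (n r_n); the existence of alpha_f(P) says r_n -> L = ln alpha_f(P).
   As the orbit is infinite, n |-> f^n P is injective, so counting orbit points of height at
   most B amounts to counting the n with n r_n <= ln B.  Once r_n stays within d of L, these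
   n are, up to a bounded number of exceptions, the n below ln B / (L +- d); hence the count
   is ln B / L + o(ln B) when L > 0, and grows faster than any multiple of ln B when L = 0. *)

Lemma iter_injective_of_infinite_orbit (X : Type) (f : X -> X) (P : X) :
  infinite_set (forward_orbit f P) -> injective (fun n => iter n f P).
Proof.
move=> inf_orbit.
suff no_return i j : (i < j)%N -> iter i f P <> iter j f P.
  move=> i j eq_ij; apply/eqP; case: ltngtP => // [lt_ij|lt_ji].
  - by case: (no_return _ _ lt_ij eq_ij).
  - by case: (no_return _ _ lt_ji (esym eq_ij)).
move=> lt_ij eq_ij; apply: inf_orbit.
apply: (@sub_finite_set _ _ ((fun n => iter n f P) @` `I_j)); last first.
  exact/finite_image/finite_II.
move=> _ [n ->]; elim: n => [|n [k lt_kj eq_kn]].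
  by exists 0%N; rewrite //= (leq_ltn_trans _ lt_ij).
rewrite iterS -eq_kn -iterS.
have [lt_k1j|] := ltnP k.+1 j; first by exists k.+1.
rewrite leq_eqVlt ltnNge lt_kj orbF => /eqP eq_k1j.
by exists i => //=; rewrite eq_ij eq_k1j.
Qed.

Lemma card_fset_set_image_II (X : choiceType) (g : nat -> X) (k : nat) :
  injective g -> #|` fset_set (g @` `I_k)| = k.
Proof.
move=> g_inj; rewrite fset_set_image; last exact: finite_II.
by rewrite card_imfset // fset_set_II card_imfset //= ?size_enum_ord //; exact: val_inj.
Qed.

Section OrbitCount.
Variables (R : realType) (X : choiceType) (f : X -> X) (h : X -> R) (P : X).
Hypothesis iter_inj : injective (fun n => iter n f P).

Lemma orbit_count_le (B : R) (M : nat) :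
  (forall n, (M <= n)%N -> B < h (iter n f P)) ->
  exists2 k : nat, orbit_count f h P B = (k%:R)%:E & (k <= M)%N.
Proof.
move=> big_after_M.
set S := forward_orbit f P `&` [set Q | h Q <= B].
have S_sub : S `<=` (fun n => iter n f P) @` `I_M.
  move=> _ [[n ->] hn]; exists n => //=; rewrite ltnNge; apply/negP => /big_after_M.
  by rewrite ltNge hn.
have finS : finite_set S by apply: sub_finite_set S_sub _; exact/finite_image/finite_II.
exists #|` fset_set S|; first by rewrite /orbit_count; case: pselect.
rewrite -[M](card_fset_set_image_II M iter_inj); apply: fsubset_leq_card.
by rewrite -fset_set_sub //; exact/finite_image/finite_II.
Qed.

Lemma orbit_count_ge (B : R) (N k : nat) :
  (forall n, (N <= n < N + k)%N -> h (iter n f P) <= B) ->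
  ((k%:R)%:E <= orbit_count f h P B)%E.
Proof.
move=> small_on_range.
rewrite /orbit_count /=; destruct pselect as [finS|]; last by rewrite leey.
have shift_inj : injective (fun i => iter (N + i) f P).
  by move=> i j eq_ij; apply/eqP; rewrite -(eqn_add2l N); apply/eqP/iter_inj.
rewrite lee_fin ler_nat -[X in (X <= _)%N](card_fset_set_image_II k shift_inj).
apply: fsubset_leq_card; rewrite -fset_set_sub //; last exact/finite_image/finite_II.
move=> _ [i ik <-]; split; first by exists (N + i)%N.
by apply: small_on_range; rewrite leq_addr ltn_add2l.
Qed.

End OrbitCount.

Lemma hplus_le (R : realType) (X : Type) (h : X -> R) (Q : X) (B : R) :
  1 <= B -> (hplus h Q <= B) = (h Q <= B).
Proof. by move=> B_ge1; rewrite /hplus ge_max B_ge1 andbT. Qed.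

Lemma hplus_ge1 (R : realType) (X : Type) (h : X -> R) (Q : X) : 1 <= hplus h Q.
Proof. by rewrite /hplus le_max lexx orbT. Qed.

Definition height_rate (R : realType) (X : Type) (f : X -> X) (h : X -> R)
    (P : X) (n : nat) : R :=
  n%:R^-1 * ln (hplus h (iter n f P)).

Section HeightRate.
Variables (R : realType) (X : Type) (f : X -> X) (h : X -> R) (P : X).
Local Notation rate := (height_rate f h P).

Lemma arith_degree_ge1 (a : R) : arith_degree_is f h P a -> 1 <= a.
Proof.
move=> ha; rewrite -(cvg_lim _ ha) //; apply: limr_ge; first by apply/cvg_ex; exists a.
near=> n; rewrite -[leLHS](powRr0 (hplus h (iter n f P))).
by apply: ler_powR; rewrite ?hplus_ge1 ?invr_ge0.
Unshelve. all: by end_near.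
Qed.

Lemma height_rate_cvg (a : R) : arith_degree_is f h P a -> rate @ \oo --> ln a.
Proof.
move=> ha; have a_gt0 : 0 < a by rewrite (lt_le_trans ltr01) ?arith_degree_ge1.
have -> : rate = (@ln R) \o fun n => powR (hplus h (iter n f P)) n%:R^-1.
  by apply/funext => n; rewrite /= ln_powR.
exact: continuous_cvg (continuous_ln a_gt0) ha.
Qed.

Lemma iter_height_le (n : nat) (B : R) : (0 < n)%N -> 1 <= B ->
  (h (iter n f P) <= B) = (n%:R * rate n <= ln B).
Proof.
move=> n_gt0 B_ge1; rewrite -hplus_le // /height_rate mulrA mulfV ?pnatr_eq0 -?lt0n //.
by rewrite mul1r ler_ln // posrE (lt_le_trans ltr01) ?hplus_ge1.
Qed.

End HeightRate.

Lemma ler_natB (R : numDomainType) (m n : nat) : m%:R - n%:R <= (m - n)%:R :> R.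
Proof.
have [le_nm|lt_mn] := leqP n m; first by rewrite natrB.
by rewrite (eqP (ltnW lt_mn : (m <= n)%N)) subr_le0 ler_nat ltnW.
Qed.

Lemma nbhs_pinfty_ln_gt (R : realType) (T : R) :
  \forall B \near +oo, 1 < B /\ T < ln B.
Proof.
apply: filterS (nbhs_pinfty_gt (num_real (expR (Num.max T 0)))) => B lt_B.
have B_gt0 : 0 < B := lt_trans (expR_gt0 _) lt_B.
have : Num.max T 0 < ln B by rewrite -[ltLHS]expRK ltr_ln ?posrE ?expR_gt0.
rewrite gt_max => /andP[lt_T lnB_gt0]; split => //.
by rewrite -[B]lnK ?posrE // -expR0 ltr_expR.
Qed.

Lemma exists_invr_approx (R : realFieldType) (L e : R) : 0 < L -> 0 < e ->
  exists2 d, 0 < d < L & `|L^-1 - (L - d)^-1| <= e /\ `|L^-1 - (L + d)^-1| <= e.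
Proof.
move=> L_gt0 e_gt0.
have near_L : \forall x \near L, `|L^-1 - x^-1| <= e.
  exact: (cvgrPdist_le _ _).1 (inv_continuous (lt0r_neq0 L_gt0)) e e_gt0.
have [r r_gt0 ball_sub] := (nbhs_ballP _ _).1 near_L.
have close x : `|L - x| < r -> `|L^-1 - x^-1| <= e.
  by move=> Lx_r; apply: ball_sub; rewrite -ball_normE.
exists (Num.min (r / 2) (L / 2)).
  by rewrite lt_min !divr_gt0 //= gt_min orbC ltr_pdivrMr ?ltr_pMr ?ltr1n.
split; apply: close; rewrite opprD addrA subrr ?add0r ?sub0r ?normrN ger0_norm;
  by rewrite ?le_min ?divr_ge0 ?ltW // gt_min ltr_pdivrMr ?ltr_pMr ?ltr1n.
Qed.

Section OrbitRatio.
Variables (R : realType) (X : choiceType) (f : X -> X) (h : X -> R) (P : X).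
Hypothesis iter_inj : injective (fun n => iter n f P).
Local Notation rate := (height_rate f h P).
Local Notation ratio B := (orbit_count f h P B * ((ln B)^-1)%:E)%E.

Lemma orbit_ratio_ge (c B : R) (N : nat) : 0 < c -> 1 < B ->
  (forall n, (N <= n)%N -> rate n <= c) ->
  (((c^-1 - (N.+2)%:R / ln B))%:E <= ratio B)%E.
Proof.
move=> c_gt0 B_gt1 rate_le; have lnB_gt0 : 0 < ln B := ln_gt0 B_gt1.
set t := Num.trunc (ln B / c).
have t_le : t%:R <= ln B / c by rewrite truncn_le divr_ge0 // ltW.
have count_ge : (((t - N.+1)%:R)%:E <= orbit_count f h P B)%E.
  apply: (orbit_count_ge iter_inj (N := N.+1)) => n /andP[lt_Nn lt_nt].
  rewrite iter_height_le; [|lia|exact: ltW].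
  have le_nt : n%:R <= t%:R :> R by rewrite ler_nat -/t; lia.
  apply: le_trans (_ : n%:R * c <= _); first by rewrite ler_wpM2l // rate_le // ltnW.
  by rewrite -ler_pdivlMr // (le_trans le_nt).
apply: le_trans (lee_wpmul2r _ count_ge); last by rewrite lee_fin invr_ge0 ltW.
have lt_t1 := truncnS_gt (ln B / c); have := ler_natB R t N.+1.
rewrite -EFinM lee_fin -!natr1 -/t => le_tN.
have -> : c^-1 - (N%:R + 1 + 1) / ln B = (ln B / c - (N%:R + 1 + 1)) / ln B.
  by field; rewrite !gt_eqF.
rewrite ler_pM2r ?invr_gt0 //; lra.
Qed.

Lemma orbit_ratio_le (c B : R) (N : nat) : 0 < c -> 1 < B ->
  (forall n, (N <= n)%N -> c <= rate n) ->
  exists2 r : R, ratio B = r%:E & r <= c^-1 + (N.+1)%:R / ln B.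
Proof.
move=> c_gt0 B_gt1 le_rate; have lnB_gt0 : 0 < ln B := ln_gt0 B_gt1.
set t := Num.trunc (ln B / c).
have [k -> le_kM] : exists2 k : nat,
    orbit_count f h P B = (k%:R)%:E & (k <= N + t.+1)%N.
  apply: (orbit_count_le iter_inj) => n le_Mn.
  rewrite ltNge iter_height_le; [|lia|exact: ltW]; rewrite -ltNge.
  have lt_n : ln B / c < n%:R.
    by apply: lt_le_trans (truncnS_gt _) _; rewrite ler_nat -/t; lia.
  apply: lt_le_trans (_ : n%:R * c <= _); last by rewrite ler_wpM2l // le_rate //; lia.
  by rewrite -ltr_pdivrMr.
exists (k%:R / ln B); first by rewrite EFinM.
have t_le : t%:R <= ln B / c by rewrite truncn_le divr_ge0 // ltW.
have : k%:R <= (N + t.+1)%:R :> R by rewrite ler_nat.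
rewrite -!natr1 natrD => le_k.
have -> : c^-1 + (N%:R + 1) / ln B = (ln B / c + N%:R + 1) / ln B.
  by field; rewrite !gt_eqF.
rewrite ler_pM2r ?invr_gt0 //; lra.
Qed.

Lemma orbit_ratio_cvgey : rate @ \oo --> 0 ->
  ratio B @[B --> +oo] --> +oo%E.
Proof.
move=> rate_0; apply/cvgeyPge => A.
set A1 := Num.max A 0 + 1.
have A1V_gt0 : 0 < A1^-1 by rewrite invr_gt0 ltr_pwDr // le_max lexx orbT.
have [N _ rate_small] := (cvgrPdist_le _ _).1 rate_0 _ A1V_gt0.
have rate_le n : (N <= n)%N -> rate n <= A1^-1.
  by move/rate_small; rewrite sub0r normrN; apply: le_trans; apply: ler_norm.
apply: filterS (nbhs_pinfty_ln_gt (N.+2)%:R) => B [B_gt1 lt_lnB].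
apply: le_trans (orbit_ratio_ge A1V_gt0 B_gt1 rate_le).
have : (N.+2)%:R / ln B < 1 by rewrite ltr_pdivrMr ?mul1r // (le_lt_trans _ lt_lnB).
rewrite lee_fin invrK /A1; have : A <= Num.max A 0 by rewrite le_max lexx.
lra.
Qed.

Lemma orbit_ratio_cvg (L : R) : 0 < L -> rate @ \oo --> L ->
  ratio B @[B --> +oo] --> (L^-1)%:E.
Proof.
move=> L_gt0 rate_L.
suff near_Linv e : 0 < e ->
    \forall B \near +oo, exists2 r : R, ratio B = r%:E & `|L^-1 - r| <= e.
  apply/fine_cvgP; split; first by apply: filterS (near_Linv _ ltr01) => B [r ->].
  apply/cvgrPdist_le => e e_gt0.
  by apply: filterS (near_Linv _ e_gt0) => B [r /= ->].
move=> e_gt0; have e2_gt0 : 0 < e / 2 by rewrite divr_gt0.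
have [d /andP[d_gt0 d_ltL] [approx_sub approx_add]] := exists_invr_approx L_gt0 e2_gt0.
have [N _ rate_close] := (cvgrPdist_le _ _).1 rate_L _ d_gt0.
have rate_ge n : (N <= n)%N -> L - d <= rate n.
  by move/rate_close; rewrite ler_distlC => /andP[].
have rate_le n : (N <= n)%N -> rate n <= L + d.
  by move/rate_close; rewrite ler_distlC => /andP[].
apply: filterS (nbhs_pinfty_ln_gt (2 * (N.+2)%:R / e)) => B [B_gt1 lt_lnB].
have lnB_gt0 : 0 < ln B := ln_gt0 B_gt1.
have Lsubd_gt0 : 0 < L - d by rewrite subr_gt0.
have [r ratio_r r_le] := orbit_ratio_le Lsubd_gt0 B_gt1 rate_ge.
have := orbit_ratio_ge (addr_gt0 L_gt0 d_gt0) B_gt1 rate_le.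
rewrite ratio_r lee_fin => r_ge; exists r => //.
have err_small : (N.+2)%:R / ln B <= e / 2.
  move: lt_lnB; rewrite ltr_pdivrMr // ler_pdivrMr // mulrAC ler_pdivlMr //.
  by rewrite [ln B * e]mulrC; lra.
have err_le : (N.+1)%:R / ln B <= (N.+2)%:R / ln B by rewrite ler_pM2r ?invr_gt0 ?ler_nat.
move: approx_sub approx_add; rewrite !ler_distl => /andP[? ?] /andP[? ?].
by apply/andP; split; lra.
Qed.

End OrbitRatio.

Theorem proposition3 (R : realType) (X : choiceType) (f : X -> X) (h : X -> R)
    (P : X) (a : R) :
  infinite_set (forward_orbit f P) ->
  arith_degree_is f h P a ->
  (fun B : R => (orbit_count f h P B * ((ln B)^-1)%:E)%E) @ +oo -->
    (if a == 1 then +oo%E else ((ln a)^-1)%:E).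
Proof.
move=> inf_orbit ha; have iter_inj := iter_injective_of_infinite_orbit inf_orbit.
have rate_lna := height_rate_cvg ha.
have [a_eq1|a_neq1] := eqVneq a 1.
  by apply: orbit_ratio_cvgey iter_inj _; rewrite -(ln1 R) -a_eq1.
apply: orbit_ratio_cvg iter_inj _ _ rate_lna; apply: ln_gt0.
by rewrite lt_neqAle eq_sym a_neq1 (arith_degree_ge1 ha).
Qed.
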